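(* Let $A$ be a group, $\mathcal{O}$ a finite collection of infinite subgroups and $X\subseteq A$ with $\mathcal{O}\hookrightarrow_h(A,X)$, and suppose the coned-off Cayley graph $\hat{\mathcal{A}}=\hat\Gamma(A,\mathcal{O},X)$ is $\delta$-hyperbolic. For all $k,l>0$ there exists $\lambda=\lambda(\delta,k,l)$ such that: if $a\in\hat{\mathcal{A}}$ is an apex, $c_1,c_2$ are $(k,l)$-quasi-geodesics sharing the endpoint $a$ and not passing through $a$ elsewhere, and $\gamma_1,\gamma_2$ are geodesics with the same endpoints as $c_1,c_2$ respectively, then $\angle_a(c_1,c_2)-\lambda\le\angle_a(\gamma_1,\gamma_2)\le\angle_a(c_1,c_2)+\lambda$. In particular $\angle_a(c_1,c_2)=\infty$ if and only if $\angle_a(\gamma_1,\gamma_2)=\infty$.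
   Context: $\hat\Gamma(A,\mathcal{O},X)$ has vertex set $A\sqcup\bigsqcup_{O\in\mathcal{O}}A/O$ (the cosets are apices), edges $\{g,gx\}$ for $x\in X$ and cone edges $\{g,gO\}$; it carries the combinatorial metric. $\mathcal{O}\hookrightarrow_h(A,X)$: $A=\langle X\cup\bigcup\mathcal{O}\rangle$, the Cayley graph with respect to $X\sqcup\bigsqcup\mathcal{O}$ is hyperbolic and each $O\in\mathcal{O}$ is locally finite for $\hat d_O(h,k)$ = length of a shortest path $h\to k$ in that Cayley graph using no edge labelled by an element of $O$ with both endpoints in $O$. For a vertex $v$ and neighbours $x,y$, $\angle_v(x,y)$ is the length of a shortest path from $x$ to $y$ avoiding $v$ ($\infty$ if none). For paths $c_1,c_2$ starting at $v$, $\angle_v(c_1,c_2)=\angle_v(x,y)$ where $x$ (resp. $y$) is the first vertex of $c_1$ (resp. $c_2$) adjacent to $v$. *)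

From Stdlib Require Import Reals List Classical ClassicalEpsilon.
From Coquelicot Require Import Rbar.
Import ListNotations.
Open Scope R_scope.

Record group := Group {
  gcar :> Type;
  gmul : gcar -> gcar -> gcar;
  ginv : gcar -> gcar;
  gone : gcar;
  gmulA : forall x y z, gmul x (gmul y z) = gmul (gmul x y) z;
  gmul1l : forall x, gmul gone x = x;
  gmulVl : forall x, gmul (ginv x) x = gone
}.
Arguments gmul {g}.
Arguments ginv {g}.
Arguments gone {g}.

Definition subgroup {A : group} (H : A -> Prop) : Prop :=
  H gone /\ (forall x y, H x -> H y -> H (gmul x y)) /\
  (forall x, H x -> H (ginv x)).

Definition infinite_set {T : Type} (S : T -> Prop) : Prop :=
  forall l : list T, exists x, S x /\ ~ In x l.

Definition finite_type (I : Type) : Prop := exists l : list I, forall i, In i l.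

Inductive generated {A : group} (S : A -> Prop) : A -> Prop :=
| gen_one : generated S gone
| gen_mul : forall g s, generated S g -> S s -> generated S (gmul g s)
| gen_mulV : forall g s, generated S g -> S s -> generated S (gmul g (ginv s)).

Section Graphs.
Variable V : Type.
Variable adj : V -> V -> Prop.

Fixpoint walk (u : V) (p : list V) (v : V) : Prop :=
  match p with
  | [] => u = v
  | x :: p' => adj u x /\ walk x p' v
  end.

Definition reach (n : nat) (u v : V) : Prop :=
  exists p, walk u p v /\ length p = n.

Definition dist_is (u v : V) (n : nat) : Prop :=
  reach n u v /\ forall m, reach m u v -> (n <= m)%nat.

(* Combinatorial (graph) distance; its value is irrelevant (0) when u, v
   lie in different components. *)
Definition gdist (u v : V) : nat :=
  match excluded_middle_informative (exists n, dist_is u v n) with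
  | left H => proj1_sig (constructive_indefinite_description _ H)
  | right _ => 0%nat
  end.

Definition connected : Prop := forall u v, exists n, reach n u v.

Definition gromov (x y w : V) : R :=
  (INR (gdist x w) + INR (gdist y w) - INR (gdist x y)) / 2.

(* delta-hyperbolicity (Gromov four-point condition for the graph metric). *)
Definition hyperbolic_graph (delta : R) : Prop :=
  connected /\
  forall x y z w, gromov x z w >= Rmin (gromov x y w) (gromov y z w) - delta.

Fixpoint chain (q : list V) : Prop :=
  match q with
  | x :: ((y :: _) as t) => adj x y /\ chain t
  | _ => True
  end.

Definition quasi_geodesic (k l : R) (q : list V) : Prop :=
  q <> [] /\ chain q /\
  forall i j x y, (i <= j)%nat -> nth_error q i = Some x -> nth_error q j = Some y ->
    INR (j - i) <= k * INR (gdist x y) + l.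

Definition geodesic (q : list V) : Prop :=
  match q with
  | [] => False
  | x :: r => chain q /\ length r = gdist x (last q x)
  end.

Definition avoid_reach (v : V) (n : nat) (x y : V) : Prop :=
  exists p, walk x p y /\ length p = n /\ x <> v /\ ~ In v p.

Definition avoid_dist_is (v x y : V) (n : nat) : Prop :=
  avoid_reach v n x y /\ forall m, avoid_reach v m x y -> (n <= m)%nat.

Definition angle_pts (v x y : V) : Rbar :=
  match excluded_middle_informative (exists n, avoid_dist_is v x y n) with
  | left H => Finite (INR (proj1_sig (constructive_indefinite_description _ H)))
  | right _ => p_infty
  end.

(* Angle at v between paths v :: r1 and v :: r2: the angle between the
   first vertices after v (which are adjacent to v). *)
Definition angle_paths (v : V) (r1 r2 : list V) : Rbar :=
  angle_pts v (hd v r1) (hd v r2).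

End Graphs.

Arguments walk {V}. Arguments reach {V}. Arguments gdist {V}.
Arguments connected {V}. Arguments hyperbolic_graph {V}.
Arguments chain {V}. Arguments quasi_geodesic {V}. Arguments geodesic {V}.
Arguments angle_pts {V}. Arguments angle_paths {V}.

Section Embedding.
Variable A : group.
Variable I : Type.
Variable O : I -> A -> Prop.
Variable X : A -> Prop.

Inductive letter := LX (x : A) | LO (i : I) (o : A).

Definition letter_ok (s : letter) : Prop :=
  match s with LX x => X x | LO i o => O i o end.

Definition letter_val (s : letter) : A :=
  match s with LX x => x | LO _ o => o end.

Definition cay_edge (s : letter) (u v : A) : Prop :=
  letter_ok s /\ (v = gmul u (letter_val s) \/ u = gmul v (letter_val s)).

Definition cay_adj (u v : A) : Prop := exists s, cay_edge s u v.

(* Edges allowed for dhat_{O_i}: no edge labelled by a letter of O_i with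
   both endpoints in O_i. *)
Definition rel_adj (i : I) (u v : A) : Prop :=
  exists s, cay_edge s u v /\
    ~ ((exists o, s = LO i o) /\ O i u /\ O i v).

Definition locally_finite_rel (i : I) : Prop :=
  forall h0 (n : nat), O i h0 ->
    exists l : list A, forall h, O i h ->
      (exists m, (m <= n)%nat /\ reach (rel_adj i) m h0 h) -> In h l.

Definition hyp_embedded : Prop :=
  (forall g : A, generated (fun s => X s \/ exists i, O i s) g) /\
  (exists delta, hyperbolic_graph cay_adj delta) /\
  (forall i, locally_finite_rel i).

Definition is_lcoset (i : I) (C : A -> Prop) : Prop :=
  exists g, forall h, C h <-> O i (gmul (ginv g) h).

(* Apices: pairs (i, gO_i), cosets represented as subsets of A. *)
Definition apex : Type := { c : I * (A -> Prop) | is_lcoset (fst c) (snd c) }.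

Definition cvertex : Type := (A + apex)%type.

Definition cone_adj (u v : cvertex) : Prop :=
  match u, v with
  | inl g, inl h => exists x, X x /\ (h = gmul g x \/ g = gmul h x)
  | inl g, inr c => snd (proj1_sig c) g
  | inr c, inl g => snd (proj1_sig c) g
  | inr _, inr _ => False
  end.

End Embedding.

Arguments hyp_embedded {A I}.
Arguments cone_adj {A I}.
Arguments cvertex {A I}.

From Stdlib Require Import Reals List Lia Lra Classical ClassicalEpsilon Arith Wf_nat.
From Coquelicot Require Import Rbar.
Import ListNotations.
Open Scope R_scope.

(* The angle at the apex a only depends on the first vertices after a, so it suffices to join the
   first vertex of each quasi-geodesic c_i to the first vertex of the geodesic gamma_i by a path
   avoiding a, of length bounded in terms of delta, k, l only: concatenating such paths moves the
   angle by at most twice that bound.  By the Morse lemma gamma_i stays within a distance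
   R(delta, k, l) of c_i, so one can follow c_i to a vertex near the point of gamma_i at distance
   R + 1 from a and return along gamma_i without meeting a. *)

Lemma least_nat (P : nat -> Prop) :
  (exists n, P n) -> exists n, P n /\ forall m, P m -> (n <= m)%nat.
Proof.
  intros HP.
  destruct (dec_inh_nat_subset_has_unique_least_element P (fun n => classic (P n)) HP)
    as [n [[Pn Hmin] _]].
  eauto.
Qed.

Lemma last_cons_default {T} (l : list T) y d1 d2 : last (y :: l) d1 = last (y :: l) d2.
Proof.
  revert y; induction l as [|z l IH]; intros y; [reflexivity|].
  exact (IH z).
Qed.

Lemma In_last {T} (l : list T) x : In (last (x :: l) x) (x :: l).
Proof.
  revert x; induction l as [|y l IH]; intros x; [now left|].
  right. change (In (last (y :: l) x) (y :: l)).
  rewrite (last_cons_default l y x y). apply IH.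
Qed.

Lemma nth_error_length_last {T} (l : list T) x :
  nth_error (x :: l) (length l) = Some (last (x :: l) x).
Proof.
  revert x; induction l as [|y l IH]; intros x; [reflexivity|].
  change (nth_error (y :: l) (length l) = Some (last (y :: l) x)).
  rewrite IH, (last_cons_default l y y x). reflexivity.
Qed.

Lemma nth_error_lt_exists {T} (l : list T) i :
  (i < length l)%nat -> exists u, nth_error l i = Some u.
Proof.
  intros Hi. destruct (nth_error l i) eqn:E; eauto.
  apply nth_error_None in E. lia.
Qed.

Lemma nth_error_hd {T} (x : T) l i u :
  nth_error (x :: l) (S i) = Some u -> nth_error (x :: l) 1 = Some (hd x l).
Proof. destruct l; [destruct i; discriminate|reflexivity]. Qed.

Section ListExtrema.
Context {T : Type} (f : T -> nat).

Definition list_min (b : T) (l : list T) : nat :=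
  fold_right (fun x m => Nat.min (f x) m) (f b) l.

Lemma list_min_le b l x : In x (b :: l) -> (list_min b l <= f x)%nat.
Proof.
  induction l as [|y l IH]; simpl; intros Hx.
  - destruct Hx as [<-|[]]. lia.
  - destruct Hx as [<-|[<-|Hx]].
    + specialize (IH (or_introl eq_refl)). lia.
    + lia.
    + specialize (IH (or_intror Hx)). lia.
Qed.

Lemma list_min_attained b l : exists x, In x (b :: l) /\ f x = list_min b l.
Proof.
  induction l as [|y l [x [Hx Ex]]]; simpl.
  - eauto.
  - destruct (le_lt_dec (f y) (list_min b l)).
    + exists y. split; [auto|lia].
    + exists x. split; [destruct Hx; auto|lia].
Qed.

Lemma list_argmax b l : exists x, In x (b :: l) /\ forall y, In y (b :: l) -> (f y <= f x)%nat.
Proof.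
  induction l as [|z l [x [Hx Hmax]]].
  - exists b. split; [now left|]. intros y [<-|[]]. lia.
  - assert (Hl : forall y, In y (b :: z :: l) -> y = z \/ In y (b :: l))
      by (intros y [<-|[<-|Hy]]; simpl; auto).
    destruct (le_lt_dec (f z) (f x)).
    + exists x. split; [destruct Hx; simpl; auto|].
      intros y Hy. destruct (Hl y Hy) as [->|Hy']; auto.
    + exists z. split; [simpl; auto|].
      intros y Hy. destruct (Hl y Hy) as [->|Hy']; [lia|]. specialize (Hmax y Hy'). lia.
Qed.

End ListExtrema.

Lemma sq_le_pow2 n : (4 <= n)%nat -> (n * n <= 2 ^ n)%nat.
Proof.
  intros Hn. replace n with (n - 4 + 4)%nat by lia.
  induction (n - 4)%nat as [|m IH]; [simpl; lia|].
  replace (S m + 4)%nat with (S (m + 4)) by lia. rewrite Nat.pow_succ_r'. nia.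
Qed.

Lemma exp_dominates_linear (a b : R) :
  exists J : nat, forall j : nat, INR (2 ^ j) <= a + b * INR j -> (j <= J)%nat.
Proof.
  destruct (INR_unbounded (Rabs a + Rabs b + 4)) as [J HJ].
  exists J. intros j Hj.
  destruct (le_lt_dec j J) as [|HJj]; [assumption|exfalso].
  apply lt_INR in HJj.
  assert (Hsq : INR j * INR j <= INR (2 ^ j)).
  { rewrite <- mult_INR. apply le_INR, sq_le_pow2, INR_le.
    replace (INR 4) with 4 by (simpl; lra). pose proof (Rabs_pos a); pose proof (Rabs_pos b); lra. }
  pose proof (Rle_abs a). pose proof (Rle_abs b). pose proof (Rabs_pos a). pose proof (Rabs_pos b).
  assert (b * INR j <= Rabs b * INR j) by (apply Rmult_le_compat_r; [apply pos_INR|auto]).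
  nra.
Qed.

Lemma linear_log_bound (c l delta : R) : 0 <= c ->
  exists Rm : nat, forall D L : nat,
    INR L <= c * INR D + l -> INR D <= 1 + delta * INR (Nat.log2_up L) -> (D <= Rm)%nat.
Proof.
  intros Hc.
  set (dp := Rmax delta 0).
  destruct (exp_dominates_linear (c + c * dp + l) (c * dp)) as [J HJ].
  destruct (INR_unbounded (1 + dp * INR (S J))) as [Rm HRm].
  exists Rm. intros D L HL HD.
  assert (Hdp : 0 <= dp) by apply Rmax_r.
  set (j := Nat.log2_up L) in *.
  assert (HDj : INR D <= 1 + dp * INR j).
  { assert (delta * INR j <= dp * INR j) by (apply Rmult_le_compat_r; [apply pos_INR|apply Rmax_l]).
    lra. }
  assert (Hj : (j <= S J)%nat).
  { destruct (le_lt_dec L 1) as [HL1|HL1].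
    - unfold j. rewrite Nat.log2_up_eqn0 by assumption. lia.
    - destruct (Nat.log2_up_spec L HL1) as [Hpow _]. fold j in Hpow.
      destruct j as [|j']; [lia|]. simpl in Hpow.
      assert (Hexp : INR (2 ^ j') <= c + c * dp + l + c * dp * INR j'); [|apply HJ in Hexp; lia].
      apply lt_INR in Hpow. rewrite S_INR in HDj.
      assert (c * INR D <= c * (1 + dp * (INR j' + 1))) by (apply Rmult_le_compat_l; lra).
      lra. }
  apply INR_le. apply le_INR in Hj.
  assert (dp * INR j <= dp * INR (S J)) by (apply Rmult_le_compat_l; lra).
  lra.
Qed.

Section Walks.
Context {V : Type} (adj : V -> V -> Prop).

Lemma walk_cat p q u v w : walk adj u p v -> walk adj v q w -> walk adj u (p ++ q) w.
Proof.
  revert u; induction p as [|x p IH]; simpl; intros u H1 H2.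
  - subst; auto.
  - destruct H1; split; eauto.
Qed.

Lemma walk_cat_inv p q u w : walk adj u (p ++ q) w ->
  walk adj u p (last (u :: p) u) /\ walk adj (last (u :: p) u) q w.
Proof.
  revert u; induction p as [|x p IH]; intros u H; [simpl in *; auto|].
  destruct H as [Hux H]. apply IH in H.
  change (last (u :: x :: p) u) with (last (x :: p) u).
  rewrite (last_cons_default p x u x). simpl; tauto.
Qed.

Lemma walk_split_at u p w v : walk adj u p w -> In v (u :: p) ->
  exists p1 p2, walk adj u p1 v /\ walk adj v p2 w /\ (length p1 + length p2 = length p)%nat.
Proof.
  revert u; induction p as [|x p IH]; intros u W Hv.
  - destruct Hv as [<-|[]]. exists [], []. simpl; auto.
  - destruct Hv as [<-|Hv].
    + exists [], (x :: p). simpl; auto.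
    + destruct W as [Hux W].
      destruct (IH x W Hv) as [p1 [p2 [W1 [W2 Hlen]]]].
      exists (x :: p1), p2. simpl. repeat split; auto.
Qed.

Lemma walk_end_In u p v : walk adj u p v -> v = u \/ In v p.
Proof.
  revert u; induction p as [|x p IH]; simpl; intros u W; [auto|].
  destruct W as [_ W]. destruct (IH x W); subst; auto.
Qed.

Lemma chain_segment_walk L i j u v : chain adj L -> (i <= j)%nat ->
  nth_error L i = Some u -> nth_error L j = Some v ->
  exists p, walk adj u p v /\ length p = (j - i)%nat /\
    forall w, In w p -> exists t, (i < t <= j)%nat /\ nth_error L t = Some w.
Proof.
  revert i j u; induction L as [|x L IH]; intros i j u HC Hij Hu Hv; [destruct i; discriminate|].
  assert (HC' : chain adj L) by (destruct L; simpl in *; tauto).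
  destruct i as [|i].
  - simpl in Hu. injection Hu as <-. destruct j as [|j].
    + simpl in Hv. injection Hv as <-. exists []. simpl; repeat split; auto. intros w [].
    + destruct L as [|y L]; [destruct j; discriminate|].
      destruct (IH 0%nat j y HC' ltac:(lia) eq_refl Hv) as [p [W [Lp Hp]]].
      exists (y :: p). simpl. repeat split; [apply HC|auto|lia|].
      intros w [<-|Hw]; [exists 1%nat; split; [lia|reflexivity]|].
      destruct (Hp w Hw) as [t [Ht Ht']]. exists (S t). split; [lia|exact Ht'].
  - destruct j as [|j]; [lia|].
    destruct (IH i j u HC' ltac:(lia) Hu Hv) as [p [W [Lp Hp]]].
    exists p. repeat split; auto.
    intros w Hw. destruct (Hp w Hw) as [t [Ht Ht']]. exists (S t). split; [lia|exact Ht'].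
Qed.

Hypothesis adj_sym : forall u v, adj u v -> adj v u.

Lemma walk_rev u p v : walk adj u p v -> exists p', walk adj v p' u /\
  length p' = length p /\ forall w, In w p' -> w = u \/ In w p.
Proof.
  revert u; induction p as [|x p IH]; simpl; intros u W.
  - subst. exists []. simpl. repeat split; tauto.
  - destruct W as [Hux W]. destruct (IH x W) as [p' [W' [Lp Hp]]].
    exists (p' ++ [u]). repeat split.
    + apply walk_cat with x; simpl; auto.
    + rewrite length_app. simpl. lia.
    + intros w Hw. apply in_app_or in Hw. destruct Hw as [Hw|[<-|[]]]; auto.
      destruct (Hp w Hw); auto.
Qed.

Hypothesis adj_conn : connected adj.

Notation d := (gdist adj).

Lemma gdist_spec u v : dist_is V adj u v (d u v).
Proof.
  unfold gdist. destruct (excluded_middle_informative _) as [H|H].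
  - destruct (constructive_indefinite_description _ H). assumption.
  - exfalso. apply H. apply least_nat, adj_conn.
Qed.

Lemma gdist_walk u v : exists p, walk adj u p v /\ length p = d u v.
Proof. destruct (gdist_spec u v) as [[p Hp] _]. eauto. Qed.

Lemma gdist_le_walk u p v : walk adj u p v -> (d u v <= length p)%nat.
Proof. intros W. apply (gdist_spec u v). exists p. auto. Qed.

Lemma gdist_xx u : d u u = 0%nat.
Proof. pose proof (gdist_le_walk u [] u eq_refl). simpl in *. lia. Qed.

Lemma gdist_sym u v : d u v = d v u.
Proof.
  assert (Hle : forall x y, (d x y <= d y x)%nat).
  { intros x y. destruct (gdist_walk y x) as [p [W <-]].
    destruct (walk_rev _ _ _ W) as [p' [W' [<- _]]]. apply gdist_le_walk; auto. }
  pose proof (Hle u v). pose proof (Hle v u). lia.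
Qed.

Lemma gdist_triangle u v w : (d u w <= d u v + d v w)%nat.
Proof.
  destruct (gdist_walk u v) as [p [W <-]]. destruct (gdist_walk v w) as [q [W' <-]].
  rewrite <- length_app. apply gdist_le_walk. eapply walk_cat; eauto.
Qed.

Lemma gdist_adj u v : adj u v -> (d u v <= 1)%nat.
Proof. intros H. apply (gdist_le_walk u [v]). simpl. auto. Qed.

Lemma gdist_walk_start u p w v : walk adj u p w -> In v (u :: p) -> (d u v <= length p)%nat.
Proof.
  intros W Hv. destruct (walk_split_at _ _ _ _ W Hv) as [p1 [p2 [W1 [_ Hlen]]]].
  apply gdist_le_walk in W1. lia.
Qed.

Lemma gdist_walk_end u p w v : walk adj u p w -> In v (u :: p) -> (d v w <= length p)%nat.
Proof.
  intros W Hv. destruct (walk_split_at _ _ _ _ W Hv) as [p1 [p2 [_ [W2 Hlen]]]].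
  apply gdist_le_walk in W2. lia.
Qed.

Lemma geodesic_nth_gdist x s i j u v : geodesic adj (x :: s) -> (i <= j)%nat ->
  nth_error (x :: s) i = Some u -> nth_error (x :: s) j = Some v -> d u v = (j - i)%nat.
Proof.
  intros [Hc Hlen] Hij Hu Hv.
  assert (Hj : (j <= length s)%nat).
  { assert (Hlt : (j < length (x :: s))%nat) by (apply nth_error_Some; congruence). simpl in Hlt. lia. }
  destruct (chain_segment_walk _ _ _ _ _ Hc Hij Hu Hv) as [p [W [Lp _]]].
  destruct (chain_segment_walk _ 0 i _ _ Hc ltac:(lia) eq_refl Hu) as [p1 [W1 [L1 _]]].
  destruct (chain_segment_walk _ j (length s) _ _ Hc Hj Hv (nth_error_length_last s x))
    as [p2 [W2 [L2 _]]].
  apply gdist_le_walk in W, W1, W2.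
  pose proof (gdist_triangle x u (last (x :: s) x)).
  pose proof (gdist_triangle u v (last (x :: s) x)).
  lia.
Qed.

Lemma geodesic_head_notin x s : geodesic adj (x :: s) -> ~ In x s.
Proof.
  intros Hg Hx. destruct (In_nth_error _ _ Hx) as [t Ht].
  pose proof (geodesic_nth_gdist x s 0 (S t) x x Hg ltac:(lia) eq_refl Ht) as E.
  rewrite gdist_xx in E. lia.
Qed.

Lemma quasi_geodesic_walk k l q u v : quasi_geodesic adj k l q -> In u q -> In v q ->
  exists p, walk adj u p v /\ INR (length p) <= k * INR (d u v) + l /\ incl p q.
Proof.
  intros [_ [Hc HQ]] Hu Hv.
  destruct (In_nth_error _ _ Hu) as [iu Hiu]. destruct (In_nth_error _ _ Hv) as [iv Hiv].
  assert (Hsub : forall i j x y, (i <= j)%nat -> nth_error q i = Some x -> nth_error q j = Some y ->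
    exists p, walk adj x p y /\ length p = (j - i)%nat /\ incl p q).
  { intros i j x y Hij Hx Hy.
    destruct (chain_segment_walk _ _ _ _ _ Hc Hij Hx Hy) as [p [W [Lp Hp]]].
    exists p. repeat split; auto.
    intros w Hw. destruct (Hp w Hw) as [t [_ Ht]]. eapply nth_error_In; eauto. }
  destruct (le_lt_dec iu iv) as [H|H].
  - destruct (Hsub _ _ _ _ H Hiu Hiv) as [p [W [Lp Hp]]].
    exists p. rewrite Lp. auto.
  - destruct (Hsub _ _ _ _ (Nat.lt_le_incl _ _ H) Hiv Hiu) as [p [W [Lp Hp]]].
    destruct (walk_rev _ _ _ W) as [p' [W' [Lp' Hp']]].
    exists p'. repeat split; auto.
    + rewrite Lp', Lp, gdist_sym. apply HQ; auto. lia.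
    + intros w Hw. destruct (Hp' w Hw) as [<-|Hw']; auto.
Qed.

Lemma avoid_reach_detour a rc sg i j p q :
  chain adj (a :: rc) -> ~ In a rc -> geodesic adj (a :: sg) ->
  nth_error (a :: rc) (S i) = Some p -> nth_error (a :: sg) (S j) = Some q ->
  (d p q < d a q)%nat ->
  avoid_reach V adj a (i + d p q + j) (hd a rc) (hd a sg).
Proof.
  intros Hc Hrc Hg Hp Hq Hpq.
  assert (Hsg := geodesic_head_notin _ _ Hg).
  assert (Hx := nth_error_hd _ _ _ _ Hp). assert (Hy := nth_error_hd _ _ _ _ Hq).
  assert (Htail : forall L t w, ~ In a L -> nth_error (a :: L) (S t) = Some w -> w <> a).
  { intros L t w HL Hw ->. exact (HL (nth_error_In L t Hw)). }
  destruct (chain_segment_walk _ 1 (S i) _ _ Hc ltac:(lia) Hx Hp) as [P [WP [LP HP]]].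
  destruct (gdist_walk p q) as [M [WM LM]].
  destruct (chain_segment_walk _ 1 (S j) _ _ (proj1 Hg) ltac:(lia) Hy Hq) as [Q [WQ [LQ HQ]]].
  destruct (walk_rev _ _ _ WQ) as [Q' [WQ' [LQ' HQ']]].
  exists (P ++ M ++ Q'). repeat split.
  - eapply walk_cat; [eauto|eapply walk_cat; eauto].
  - rewrite !length_app. lia.
  - exact (Htail _ _ _ Hrc Hx).
  - intros Hin. apply in_app_or in Hin as [Hin|Hin]; [|apply in_app_or in Hin as [Hin|Hin]].
    + destruct (HP a Hin) as [[|t] [Ht Ht']]; [lia|]. exact (Htail _ _ _ Hrc Ht' eq_refl).
    + (* every vertex of a shortest path from p to q is closer to q than a is *)
      pose proof (gdist_walk_end _ _ _ _ WM (or_intror Hin)). lia.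
    + destruct (HQ' a Hin) as [E|Hin'].
      * exact (Htail _ _ _ Hsg Hy (eq_sym E)).
      * destruct (HQ a Hin') as [[|t] [Ht Ht']]; [lia|]. exact (Htail _ _ _ Hsg Ht' eq_refl).
Qed.

Lemma avoid_reach_first_vertices k l (Rm : nat) a rc sg :
  0 <= k -> quasi_geodesic adj k l (a :: rc) -> rc <> [] -> ~ In a rc ->
  geodesic adj (a :: sg) -> last (a :: sg) a = last (a :: rc) a ->
  (forall q, In q (a :: sg) -> exists p, In p (a :: rc) /\ (d q p <= Rm)%nat) ->
  exists N, INR N <= k * INR (2 * Rm + 1) + l + 2 * INR Rm /\
    avoid_reach V adj a N (hd a rc) (hd a sg).
Proof.
  intros Hk Hq Hne Hrc Hg Hlast Hnear.
  assert (Hgd : forall i j u v, (i <= j)%nat -> nth_error (a :: sg) i = Some u ->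
                 nth_error (a :: sg) j = Some v -> d u v = (j - i)%nat)
    by (intros; eapply geodesic_nth_gdist; eauto).
  (* Either the geodesic is short and p = q is the common endpoint, or q is its vertex at
     distance Rm + 1 from a and p a vertex of the quasi-geodesic within Rm of q. *)
  assert (Hpick : exists i j p q, nth_error (a :: rc) (S i) = Some p /\
            nth_error (a :: sg) (S j) = Some q /\ (d p q < d a q)%nat /\
            (d p q <= Rm)%nat /\ (S j <= Rm + 1)%nat).
  { destruct (le_lt_dec (length sg) (Rm + 1)) as [Hshort|Hlong].
    - destruct rc as [|x r]; [congruence|].
      set (e := last (a :: sg) a).
      assert (He : nth_error (a :: x :: r) (S (length r)) = Some e)
        by (unfold e; rewrite Hlast; apply (nth_error_length_last (x :: r))).
      assert (Hae : d a e = length sg) by (symmetry; apply Hg).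
      destruct sg as [|y s] eqn:Es.
      + exfalso. apply Hrc. exact (nth_error_In (x :: r) (length r) He).
      + exists (length r), (length s), e, e.
        rewrite gdist_xx, Hae. simpl in *. repeat split; auto; try lia.
        exact (nth_error_length_last (y :: s) a).
    - destruct (nth_error_lt_exists (a :: sg) (Rm + 1)) as [q Hq']; [simpl; lia|].
      assert (Haq : d a q = (Rm + 1)%nat) by (rewrite (Hgd 0%nat (Rm + 1)%nat a q) by (auto; lia); lia).
      destruct (Hnear q (nth_error_In _ _ Hq')) as [p [Hp Hqp]].
      destruct (In_nth_error _ _ Hp) as [[|i] Hi].
      + injection Hi as E. subst p. rewrite gdist_sym in Hqp. lia.
      + exists i, Rm, p, q. rewrite gdist_sym. replace (S Rm) with (Rm + 1)%nat by lia.
        repeat split; auto; lia. }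
  destruct Hpick as [i [j [p [q [Hp [Hq' [Hpq [HpqR HjR]]]]]]]].
  exists (i + d p q + j)%nat. split; [|apply avoid_reach_detour; auto; apply Hq].
  assert (Hap : (d a p <= 2 * Rm + 1)%nat).
  { pose proof (gdist_triangle a q p). rewrite (gdist_sym q p) in *.
    rewrite (Hgd 0%nat (S j) a q) in * by (auto; lia). lia. }
  destruct Hq as [_ [_ HQ]].
  pose proof (HQ 0%nat (S i) a p (Nat.le_0_l _) eq_refl Hp) as Hi.
  apply le_INR in Hap, HpqR, HjR.
  assert (k * INR (d a p) <= k * INR (2 * Rm + 1)) by (apply Rmult_le_compat_l; auto).
  rewrite 2!plus_INR. rewrite Nat.sub_0_r, S_INR in Hi. rewrite plus_INR, S_INR in HjR.
  simpl in HjR. lra.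
Qed.

Lemma quasi_geodesic_far_walk k l q w (D : nat) y z y' z' :
  0 <= k -> quasi_geodesic adj k l q -> In y' q -> In z' q ->
  (forall v, In v q -> (D <= d v w)%nat) ->
  (D + d y y' <= d y w)%nat -> (D + d z z' <= d z w)%nat ->
  exists P, walk adj y P z /\
    INR (length P) <= INR (d y y' + d z z') + k * INR (d y y' + d y z + d z z') + l /\
    forall v, In v (y :: P) -> (D <= d v w)%nat.
Proof.
  intros Hk Hq Hy' Hz' Hfar Hy Hz.
  destruct (gdist_walk y y') as [P1 [W1 L1]].
  destruct (quasi_geodesic_walk _ _ _ _ _ Hq Hy' Hz') as [P2 [W2 [L2 H2]]].
  destruct (gdist_walk z' z) as [P3 [W3 L3]].
  exists (P1 ++ P2 ++ P3). repeat split.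
  - eapply walk_cat; [eauto|eapply walk_cat; eauto].
  - assert (Hy'z' : (d y' z' <= d y y' + d y z + d z z')%nat).
    { pose proof (gdist_triangle y' y z'). pose proof (gdist_triangle y z z').
      rewrite (gdist_sym y' y) in *. lia. }
    set (s := (d y y' + d y z + d z z')%nat) in *.
    apply le_INR in Hy'z'.
    assert (k * INR (d y' z') <= k * INR s) by (apply Rmult_le_compat_l; auto).
    rewrite !length_app, !plus_INR, L1, L3, (gdist_sym z' z). lra.
  - intros v Hv.
    assert (Hv' : In v (y :: P1) \/ In v P2 \/ In v (z' :: P3)).
    { destruct Hv as [<-|Hv]; [now left; left|].
      apply in_app_or in Hv as [Hv|Hv]; [now left; right|].
      apply in_app_or in Hv as [Hv|Hv]; [now right; left|now right; right; right]. }
    clear Hv. destruct Hv' as [Hv|[Hv|Hv]].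
    + pose proof (gdist_walk_start _ _ _ _ W1 Hv). pose proof (gdist_triangle y v w). lia.
    + exact (Hfar v (H2 v Hv)).
    + pose proof (gdist_walk_end _ _ _ _ W3 Hv). pose proof (gdist_triangle z v w).
      rewrite (gdist_sym z v), (gdist_sym z' z) in *. lia.
Qed.

Section Hyperbolic.
Variable delta : R.
Hypothesis four_point : forall x y z w,
  gromov V adj x z w >= Rmin (gromov V adj x y w) (gromov V adj y z w) - delta.

Lemma hyperbolicity_const_nonneg (v : V) : 0 <= delta.
Proof.
  specialize (four_point v v v v). unfold gromov in four_point. rewrite gdist_xx in four_point.
  unfold Rmin in four_point. destruct Rle_dec; simpl in four_point; lra.
Qed.

(* Halving the walk and applying the four-point condition at the midpoint costs one delta. *)
Lemma gromov_ge_far_walk_pow2 j : forall x P z w r, walk adj x P z -> (length P <= 2 ^ j)%nat ->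
  (forall v, In v (x :: P) -> r <= INR (d v w)) -> gromov V adj x z w >= r - 1 - INR j * delta.
Proof.
  pose proof hyperbolicity_const_nonneg as Hd.
  induction j as [|j IH]; intros x P z w r W Lp Hfar.
  - unfold gromov. simpl in Lp.
    destruct P as [|y [|]]; [|destruct W as [Hxy <-]|simpl in Lp; lia].
    + simpl in W. subst z. rewrite gdist_xx. specialize (Hfar x (or_introl eq_refl)). simpl. lra.
    + pose proof (gdist_adj _ _ Hxy) as H1. apply le_INR in H1. simpl in H1.
      pose proof (Hfar x (or_introl eq_refl)). pose proof (Hfar y (or_intror (or_introl eq_refl))).
      simpl. lra.
  - rewrite S_INR. specialize (Hd x).
    destruct (le_lt_dec (length P) (2 ^ j)) as [Hle|Hlt].
    { specialize (IH x P z w r W Hle Hfar). nra. }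
    rewrite <- (firstn_skipn (2 ^ j) P) in W, Hfar.
    set (P1 := firstn (2 ^ j) P) in *. set (P2 := skipn (2 ^ j) P) in *.
    apply walk_cat_inv in W as [W1 W2].
    set (y := last (x :: P1) x) in *.
    assert (L1 : length P1 = (2 ^ j)%nat) by (apply firstn_length_le; lia).
    assert (L2 : (length P2 <= 2 ^ j)%nat) by (unfold P2; rewrite length_skipn; simpl in Lp; lia).
    assert (G1 : gromov V adj x y w >= r - 1 - INR j * delta).
    { apply (IH x P1); [exact W1|lia|].
      intros v [<-|Hv]; apply Hfar; [now left|right; apply in_or_app; auto]. }
    assert (G2 : gromov V adj y z w >= r - 1 - INR j * delta).
    { apply (IH y P2); [exact W2|exact L2|].
      intros v [<-|Hv]; apply Hfar.
      - unfold y. destruct (In_last P1 x) as [<-|Hy]; [now left|right; apply in_or_app; auto].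
      - right. apply in_or_app; auto. }
    specialize (four_point x y z w). unfold Rmin in four_point. destruct Rle_dec; lra.
Qed.

Lemma far_walk_log_bound x P z w (D : nat) : walk adj x P z ->
  (forall v, In v (x :: P) -> (D <= d v w)%nat) -> (d x w + d w z = d x z)%nat ->
  INR D <= 1 + delta * INR (Nat.log2_up (length P)).
Proof.
  intros W Hfar Hgeo.
  assert (Hpow : (length P <= 2 ^ Nat.log2_up (length P))%nat).
  { destruct (length P) eqn:E; [simpl; lia|]. apply Nat.log2_log2_up_spec. lia. }
  pose proof (gromov_ge_far_walk_pow2 _ _ _ _ _ (INR D) W Hpow
                (fun v Hv => le_INR _ _ (Hfar v Hv))) as G.
  unfold gromov in G. rewrite (gdist_sym z w) in G.
  apply (f_equal INR) in Hgeo. rewrite plus_INR in Hgeo.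
  lra.
Qed.

Variables (k l : R) (Rm : nat).
Hypothesis Rm_bound : forall D L : nat, INR L <= (2 + 6 * k) * INR D + l ->
  INR D <= 1 + delta * INR (Nat.log2_up L) -> (D <= Rm)%nat.

(* Let q0 be a vertex of the geodesic at distance D from the quasi-geodesic, no vertex of the
   geodesic being farther.  The vertices y, z of the geodesic at distance 2D on either side of q0
   (or its endpoints) can be joined, through the quasi-geodesic, by a walk of length O(D) staying
   D away from q0; as q0 lies on a geodesic from y to z, hyperbolicity forces D = O(log D). *)
Lemma geodesic_farthest_point_bound a rc sg q0 (D : nat) :
  0 <= k -> quasi_geodesic adj k l (a :: rc) -> geodesic adj (a :: sg) ->
  last (a :: sg) a = last (a :: rc) a -> In q0 (a :: sg) ->
  (forall v, In v (a :: rc) -> (D <= d v q0)%nat) ->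
  (forall q, In q (a :: sg) -> exists p, In p (a :: rc) /\ (d q p <= D)%nat) ->
  (D <= Rm)%nat.
Proof.
  intros Hk Hq Hg Hlast Hq0 Hfar_rc Hnear.
  assert (Hgd : forall i j u v, (i <= j)%nat -> nth_error (a :: sg) i = Some u ->
                 nth_error (a :: sg) j = Some v -> d u v = (j - i)%nat)
    by (intros; eapply geodesic_nth_gdist; eauto).
  destruct (In_nth_error _ _ Hq0) as [t Ht].
  set (n := length sg).
  assert (Htn : (t <= n)%nat).
  { assert (Hlt : (t < length (a :: sg))%nat) by (apply nth_error_Some; congruence).
    simpl in Hlt. unfold n. lia. }
  destruct (nth_error_lt_exists (a :: sg) (t - 2 * D)) as [y Hy]; [simpl; lia|].
  destruct (nth_error_lt_exists (a :: sg) (Nat.min (t + 2 * D) n)) as [z Hz]; [simpl; lia|].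
  assert (Hyq : d y q0 = (t - (t - 2 * D))%nat) by (apply Hgd; auto; lia).
  assert (Hqz : d q0 z = (Nat.min (t + 2 * D) n - t)%nat) by (apply Hgd; auto; lia).
  assert (Hyz : d y z = (Nat.min (t + 2 * D) n - (t - 2 * D))%nat) by (apply Hgd; auto; lia).
  assert (Cy : exists y', In y' (a :: rc) /\ (d y y' <= D)%nat /\ (D + d y y' <= d y q0)%nat).
  { destruct (le_lt_dec (2 * D) t) as [H|H].
    - destruct (Hnear y (nth_error_In _ _ Hy)) as [y' [Hy' Hyy']].
      exists y'. repeat split; auto. lia.
    - replace (t - 2 * D)%nat with 0%nat in Hy by lia. injection Hy as <-.
      exists a. rewrite gdist_xx. specialize (Hfar_rc a (or_introl eq_refl)).
      repeat split; [now left|lia|lia]. }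
  assert (Cz : exists z', In z' (a :: rc) /\ (d z z' <= D)%nat /\ (D + d z z' <= d z q0)%nat).
  { rewrite (gdist_sym z q0). destruct (le_lt_dec (t + 2 * D) n) as [H|H].
    - destruct (Hnear z (nth_error_In _ _ Hz)) as [z' [Hz' Hzz']].
      exists z'. repeat split; auto. lia.
    - replace (Nat.min (t + 2 * D) n) with n in Hz by lia.
      unfold n in Hz. rewrite nth_error_length_last, Hlast in Hz.
      assert (Hze : z = last (a :: rc) a) by congruence. subst z.
      exists (last (a :: rc) a). rewrite gdist_xx. specialize (Hfar_rc _ (In_last rc a)).
      rewrite gdist_sym in Hfar_rc. repeat split; [apply In_last|lia|lia]. }
  destruct Cy as [y' [Hy' [Hyy' Cy]]]. destruct Cz as [z' [Hz' [Hzz' Cz]]].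
  assert (Hgeo : (d y q0 + d q0 z = d y z)%nat) by lia.
  destruct (quasi_geodesic_far_walk k l (a :: rc) q0 D y z y' z' Hk Hq Hy' Hz' Hfar_rc Cy Cz)
    as [P [W [HL Hfar]]].
  apply (Rm_bound D (length P)); [|exact (far_walk_log_bound _ _ _ _ _ W Hfar Hgeo)].
  assert (Hs : (d y y' + d y z + d z z' <= 6 * D)%nat) by lia.
  assert (Hs' : (d y y' + d z z' <= 2 * D)%nat) by lia.
  apply le_INR in Hs, Hs'. rewrite mult_INR in Hs, Hs'. simpl in Hs, Hs'.
  assert (k * INR (d y y' + d y z + d z z') <= k * ((1 + 1 + 1 + 1 + 1 + 1) * INR D))
    by (apply Rmult_le_compat_l; auto).
  lra.
Qed.

Lemma geodesic_near_quasi_geodesic a rc sg : 0 <= k -> quasi_geodesic adj k l (a :: rc) ->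
  geodesic adj (a :: sg) -> last (a :: sg) a = last (a :: rc) a ->
  forall q, In q (a :: sg) -> exists p, In p (a :: rc) /\ (d q p <= Rm)%nat.
Proof.
  intros Hk Hq Hg Hlast.
  set (dist_rc v := list_min (d v) a rc).
  assert (Hnearest : forall v, exists p, In p (a :: rc) /\ d v p = dist_rc v)
    by (intros v; apply list_min_attained).
  destruct (list_argmax dist_rc a sg) as [q0 [Hq0 Hmax]].
  assert (HD : (dist_rc q0 <= Rm)%nat).
  { apply (geodesic_farthest_point_bound a rc sg q0); auto.
    - intros v Hv. rewrite gdist_sym. apply list_min_le, Hv.
    - intros q Hq'. destruct (Hnearest q) as [p [Hp Ep]].
      exists p. specialize (Hmax q Hq'). split; [exact Hp|lia]. }
  intros q Hq'. destruct (Hnearest q) as [p [Hp Ep]].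
  exists p. specialize (Hmax q Hq'). split; [exact Hp|lia].
Qed.

End Hyperbolic.

Lemma avoid_reach_cat v n1 n2 x y z : avoid_reach V adj v n1 x y -> avoid_reach V adj v n2 y z ->
  avoid_reach V adj v (n1 + n2) x z.
Proof.
  intros [p [W [Lp [Hx Hp]]]] [q [W' [Lq [_ Hq]]]].
  exists (p ++ q). repeat split; auto.
  - eapply walk_cat; eauto.
  - rewrite length_app. lia.
  - intros H. apply in_app_or in H. tauto.
Qed.

Lemma avoid_reach_sym v n x y : avoid_reach V adj v n x y -> avoid_reach V adj v n y x.
Proof.
  intros [p [W [Lp [Hx Hp]]]].
  destruct (walk_rev _ _ _ W) as [p' [W' [Lp' Hp']]].
  exists p'. repeat split; [auto|lia| |].
  - intros ->. destruct (walk_end_In _ _ _ W); subst; auto.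
  - intros H. destruct (Hp' v H); subst; auto.
Qed.

Lemma angle_pts_le v n x y : avoid_reach V adj v n x y ->
  exists m, angle_pts adj v x y = Finite (INR m) /\ (m <= n)%nat /\ avoid_reach V adj v m x y.
Proof.
  intros H. unfold angle_pts. destruct (excluded_middle_informative _) as [H0|H0].
  - destruct (constructive_indefinite_description _ H0) as [m [Hm1 Hm2]]. simpl. eauto.
  - exfalso. apply H0. apply least_nat. eauto.
Qed.

Lemma angle_pts_cases v x y : angle_pts adj v x y = p_infty \/
  exists m, angle_pts adj v x y = Finite (INR m) /\ avoid_reach V adj v m x y.
Proof.
  unfold angle_pts. destruct (excluded_middle_informative _) as [H0|H0]; [|auto].
  destruct (constructive_indefinite_description _ H0) as [m Hm]. simpl. right. exists m. split; [reflexivity|apply Hm].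
Qed.

Lemma angle_pts_perturb v x1 x2 y1 y2 N1 N2 (C : R) :
  avoid_reach V adj v N1 x1 y1 -> avoid_reach V adj v N2 x2 y2 ->
  INR N1 <= C -> INR N2 <= C ->
  Rbar_le (Rbar_minus (angle_pts adj v x1 x2) (Finite (2 * C))) (angle_pts adj v y1 y2) /\
  Rbar_le (angle_pts adj v y1 y2) (Rbar_plus (angle_pts adj v x1 x2) (Finite (2 * C))) /\
  (angle_pts adj v x1 x2 = p_infty <-> angle_pts adj v y1 y2 = p_infty).
Proof.
  intros A1 A2 C1 C2.
  assert (Hy : forall m, avoid_reach V adj v m x1 x2 ->
                 avoid_reach V adj v (N1 + m + N2) y1 y2).
  { intros m Hm. eapply avoid_reach_cat; [eapply avoid_reach_cat|]; eauto using avoid_reach_sym. }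
  assert (Hx : forall m, avoid_reach V adj v m y1 y2 ->
                 avoid_reach V adj v (N1 + m + N2) x1 x2).
  { intros m Hm. eapply avoid_reach_cat; [eapply avoid_reach_cat|]; eauto using avoid_reach_sym. }
  destruct (angle_pts_cases v x1 x2) as [Ex|[m [Ex Am]]].
  - destruct (angle_pts_cases v y1 y2) as [Ey|[m [Ey Am]]].
    + rewrite Ex, Ey. simpl. tauto.
    + destruct (angle_pts_le _ _ _ _ (Hx m Am)) as [m' [E _]]. congruence.
  - destruct (angle_pts_le _ _ _ _ (Hy m Am)) as [m' [Ey [Hm' Am']]].
    destruct (angle_pts_le _ _ _ _ (Hx m' Am')) as [m'' [Ex' [Hm'' _]]].
    rewrite Ex in Ex'. injection Ex' as Ex'. apply INR_eq in Ex'. subst m''.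
    rewrite Ex, Ey. simpl.
    apply le_INR in Hm', Hm''. rewrite !plus_INR in Hm', Hm''.
    repeat split; try lra; discriminate.
Qed.

End Walks.

Lemma cone_adj_sym (A : group) (I : Type) (O : I -> A -> Prop) (X : A -> Prop) u v :
  cone_adj O X u v -> cone_adj O X v u.
Proof.
  destruct u as [g|c], v as [h|c']; simpl; auto.
  intros [x [Hx [E|E]]]; exists x; auto.
Qed.

Theorem lemma4p6 :
  forall (delta k l : R), 0 < k -> 0 < l ->
  exists lam : R,
  forall (A : group) (I : Type) (O : I -> A -> Prop) (X : A -> Prop),
    finite_type I ->
    (forall i, subgroup (O i)) ->
    (forall i, infinite_set (O i)) ->
    hyp_embedded O X ->
    hyperbolic_graph (cone_adj O X) delta ->
    forall (a : apex A I O) (r1 r2 s1 s2 : list (cvertex O)),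
      let av : cvertex O := inr a in
      r1 <> [] -> r2 <> [] ->
      quasi_geodesic (cone_adj O X) k l (av :: r1) ->
      quasi_geodesic (cone_adj O X) k l (av :: r2) ->
      ~ In av r1 -> ~ In av r2 ->
      geodesic (cone_adj O X) (av :: s1) ->
      geodesic (cone_adj O X) (av :: s2) ->
      last (av :: s1) av = last (av :: r1) av ->
      last (av :: s2) av = last (av :: r2) av ->
      Rbar_le (Rbar_minus (angle_paths (cone_adj O X) av r1 r2) (Finite lam))
              (angle_paths (cone_adj O X) av s1 s2) /\
      Rbar_le (angle_paths (cone_adj O X) av s1 s2)
              (Rbar_plus (angle_paths (cone_adj O X) av r1 r2) (Finite lam)) /\
      (angle_paths (cone_adj O X) av r1 r2 = p_infty <->
       angle_paths (cone_adj O X) av s1 s2 = p_infty).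
Proof.
  intros delta k l Hk Hl.
  destruct (linear_log_bound (2 + 6 * k) l delta) as [Rm HRm]; [lra|].
  exists (2 * (k * INR (2 * Rm + 1) + l + 2 * INR Rm)).
  intros A I O X _ _ _ _ [Hconn Hhyp] a r1 r2 s1 s2 av Hr1 Hr2 Hq1 Hq2 Hn1 Hn2 Hg1 Hg2 He1 He2.
  pose proof (cone_adj_sym A I O X) as Hsym.
  assert (Hk' : 0 <= k) by lra.
  assert (Hdetour : forall r s, r <> [] -> quasi_geodesic (cone_adj O X) k l (av :: r) ->
            ~ In av r -> geodesic (cone_adj O X) (av :: s) -> last (av :: s) av = last (av :: r) av ->
            exists N, INR N <= k * INR (2 * Rm + 1) + l + 2 * INR Rm /\
              avoid_reach _ (cone_adj O X) av N (hd av r) (hd av s)).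
  { intros r s Hr Hq Hn Hg He.
    apply (avoid_reach_first_vertices _ Hsym Hconn); auto.
    exact (geodesic_near_quasi_geodesic _ Hsym Hconn delta Hhyp k l Rm HRm av r s Hk' Hq Hg He). }
  destruct (Hdetour r1 s1 Hr1 Hq1 Hn1 Hg1 He1) as [N1 [HN1 A1]].
  destruct (Hdetour r2 s2 Hr2 Hq2 Hn2 Hg2 He2) as [N2 [HN2 A2]].
  exact (angle_pts_perturb _ Hsym _ _ _ _ _ _ _ _ A1 A2 HN1 HN2).
Qed.
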